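(* In the sequent calculus $NL^{\Rightarrow}$: if $\vdash_n\Sigma;\Gamma\Rightarrow\Delta$ and $\Sigma\le\Sigma'$, then $\vdash_n\Sigma';\Gamma\Rightarrow\Delta$.
   Context: Types $\tau ::= \delta \mid \nu \mid \langle\nu\rangle\tau$ ($\delta$ data types, $\nu$ name types). Terms $t ::= x \mid \mathsf{a} \mid c \mid f(\vec t)$ over variables $x$ and a disjoint countably infinite set of name-symbols $\mathsf a$; the signature contains, for all $\nu,\tau$, swapping $(a\;b)\cdot t$, abstraction $\langle a\rangle t$, equality $t\approx u$, freshness $a\#t$, besides constants $c$, function symbols $f$, relation symbols $p$. Formulas: $\top,\bot$, atoms, $\wedge,\vee,\supset,\forall x{:}\tau,\exists x{:}\tau$, and $\mathsf N\mathsf a{:}\nu.\phi$ (binding the name-symbol $\mathsf a$). Contexts $\Sigma::=\cdot\mid\Sigma,x{:}\tau\mid\Sigma\#\mathsf a{:}\nu$ (no symbol twice; $\Sigma\#\mathsf a{:}\nu$ means $\mathsf a$ is fresh for everything in $\Sigma$); $Tm_\Sigma$ = terms well-typed in $\Sigma$; $|\cdot|=\emptyset$, $|\Sigma,x{:}\tau|=|\Sigma|$, $|\Sigma\#\mathsf a{:}\nu|=|\Sigma|\cup\{\mathsf a\#t\mid t\in Tm_\Sigma\}$. $\Sigma\le\Sigma'$ means $Tm_\Sigma\subseteq Tm_{\Sigma'}$ and $|\Sigma|\subseteq|\Sigma'|$. Rules of $NL^{\Rightarrow}$ for $\Sigma;\Gamma\Rightarrow\Delta$: (i) classical G3c rules: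 initial sequents $\Sigma;\Gamma,P\Rightarrow P,\Delta$ ($P$ atomic), $\top R$, $\bot L$, context-sharing left/right rules for $\wedge,\vee,\supset,\forall,\exists$ (eigenvariables $x\notin\Sigma$ added to $\Sigma$, instantiating terms well-typed in $\Sigma$); (ii) $\mathsf N R$: from $\Sigma\#\mathsf a{:}\nu;\Gamma\Rightarrow\phi,\Delta$ infer $\Sigma;\Gamma\Rightarrow\mathsf N\mathsf a{:}\nu.\phi,\Delta$; $\mathsf N L$: from $\Sigma\#\mathsf a{:}\nu;\Gamma,\phi\Rightarrow\Delta$ infer $\Sigma;\Gamma,\mathsf N\mathsf a{:}\nu.\phi\Rightarrow\Delta$ ($\mathsf a\notin\Sigma$); (iii) nonlogical rules: $\approx R$: from $\Sigma;\Gamma,t\approx t\Rightarrow\Delta$ infer $\Sigma;\Gamma\Rightarrow\Delta$; $\approx S$: from $\Sigma;\Gamma,t\approx u,P(t),P(u)\Rightarrow\Delta$ infer $\Sigma;\Gamma,t\approx u,P(t)\Rightarrow\Delta$; for each instance $\bigwedge_j P_j\supset\bigvee_{i\le m}Q_i$ of (S1) $(a\;a)\cdot x\approx x$, (S2) $(a\;b)\cdot(a\;b)\cdot x\approx x$, (S3) $(a\;b)\cdot a\approx b$, (E1) $(a\;b)\cdot c\approx c$, (E2) $(a\;b)\cdot f(\vec t)\approx f((a\;b)\cdot\vec t)$, (E3) $p(\vec t)\supset p((a\;b)\cdot\vec t)$, (F1) $a\#x\wedge b\#x\supset(a\;b)\cdot x\approx x$, (F2) $a\#b$ ($a,b$ of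 distinct name types), (F3) $a\#a\supset\bot$, (F4) $a\#b\vee a\approx b$, (A1) $a\#y\wedge x\approx(a\;b)\cdot y\supset\langle a\rangle x\approx\langle b\rangle y$ (arbitrary well-typed terms), the rule: from $\Sigma;\Gamma,\vec P,Q_i\Rightarrow\Delta$ for all $i$ infer $\Sigma;\Gamma,\vec P\Rightarrow\Delta$; (A2) from $\Sigma;\Gamma,E,a\approx b,t\approx u\Rightarrow\Delta$ and $\Sigma;\Gamma,E,a\#u,t\approx(a\;b)\cdot u\Rightarrow\Delta$ infer $\Sigma;\Gamma,E\Rightarrow\Delta$, $E$ being $\langle a\rangle t\approx\langle b\rangle u$; (A3) from $\Sigma\vdash t:\langle\nu\rangle\sigma$ and $\Sigma,a{:}\nu,x{:}\sigma;\Gamma,t\approx\langle a\rangle x\Rightarrow\Delta$ ($a,x\notin\Sigma$) infer $\Sigma;\Gamma\Rightarrow\Delta$; (F) from $\Sigma\#\mathsf a{:}\nu;\Gamma\Rightarrow\Delta$ ($\mathsf a\notin\Sigma$) infer $\Sigma;\Gamma\Rightarrow\Delta$; ($\Sigma\#$) from $\Sigma;\Gamma,\mathsf a\#t\Rightarrow\Delta$ with $\mathsf a\#t\in|\Sigma|$ infer $\Sigma;\Gamma\Rightarrow\Delta$. $\vdash_n J$ means $J$ has a derivation of height at most $n$. *)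

(* Terms and formulas are in locally nameless style: free variables / free
   name-symbols are named (nat), bound ones are de Bruijn indices
   (BV for bound variables, BN for bound name-symbols). *)
From Stdlib Require Import List Permutation.
Import ListNotations.
Set Implicit Arguments.

(** Types  tau ::= delta | nu | <nu> tau  over data types D and name types N *)
Inductive ty (D N : Type) : Type :=
| TData : D -> ty D N
| TName : N -> ty D N
| TAbs  : N -> ty D N -> ty D N.
Arguments TData {D N}.
Arguments TName {D N}.
Arguments TAbs {D N}.

(** A (user) signature: data types, name types, constants, function symbols,
    relation symbols, with their typings.  Swapping, abstraction, equality and
    freshness are built in (for all types). *)
Record Sig := {
  sD : Type; sN : Type; sC : Type; sF : Type; sP : Type;
  cty : sC -> ty sD sN;
  fty : sF -> list (ty sD sN) * ty sD sN;
  pty : sP -> list (ty sD sN)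
}.

Section NL.
Variable Sg : Sig.

Definition type := ty (sD Sg) (sN Sg).

Inductive tm : Type :=
| Var   : nat -> tm
| BV    : nat -> tm
| Name  : nat -> tm
| BN    : nat -> tm
| Const : sC Sg -> tm
| App   : sF Sg -> list tm -> tm
| Swap  : tm -> tm -> tm -> tm
| Abs   : tm -> tm -> tm.

Inductive atom : Type :=
| AEq    : tm -> tm -> atom
| AFresh : tm -> tm -> atom
| ARel   : sP Sg -> list tm -> atom.

Inductive form : Type :=
| FTop | FBot
| FAtom : atom -> form
| FAnd : form -> form -> form
| FOr  : form -> form -> form
| FImp : form -> form -> form
| FAll : type -> form -> form
| FEx  : type -> form -> form
| FNew : sN Sg -> form -> form.      (* N a:nu. phi        (binds BN 0) *)

Definition Eqf (t u : tm) : form := FAtom (AEq t u).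
Definition Frf (a t : tm) : form := FAtom (AFresh a t).

Fixpoint tm_openv (k : nat) (u t : tm) : tm :=
  match t with
  | BV i => if Nat.eqb i k then u else t
  | App f ts => App f (map (tm_openv k u) ts)
  | Swap a b t => Swap (tm_openv k u a) (tm_openv k u b) (tm_openv k u t)
  | Abs a t => Abs (tm_openv k u a) (tm_openv k u t)
  | _ => t
  end.

Fixpoint tm_openn (k : nat) (u t : tm) : tm :=
  match t with
  | BN i => if Nat.eqb i k then u else t
  | App f ts => App f (map (tm_openn k u) ts)
  | Swap a b t => Swap (tm_openn k u a) (tm_openn k u b) (tm_openn k u t)
  | Abs a t => Abs (tm_openn k u a) (tm_openn k u t)
  | _ => t
  end.

Definition atom_map (g : tm -> tm) (A : atom) : atom :=
  match A with
  | AEq t u => AEq (g t) (g u)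
  | AFresh a t => AFresh (g a) (g t)
  | ARel p ts => ARel p (map g ts)
  end.

Fixpoint form_openv (k : nat) (u : tm) (phi : form) : form :=
  match phi with
  | FTop => FTop | FBot => FBot
  | FAtom A => FAtom (atom_map (tm_openv k u) A)
  | FAnd A B => FAnd (form_openv k u A) (form_openv k u B)
  | FOr A B => FOr (form_openv k u A) (form_openv k u B)
  | FImp A B => FImp (form_openv k u A) (form_openv k u B)
  | FAll tau A => FAll tau (form_openv (S k) u A)
  | FEx tau A => FEx tau (form_openv (S k) u A)
  | FNew nu A => FNew nu (form_openv k u A)
  end.

Fixpoint form_openn (k : nat) (u : tm) (phi : form) : form :=
  match phi with
  | FTop => FTop | FBot => FBot
  | FAtom A => FAtom (atom_map (tm_openn k u) A)
  | FAnd A B => FAnd (form_openn k u A) (form_openn k u B)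
  | FOr A B => FOr (form_openn k u A) (form_openn k u B)
  | FImp A B => FImp (form_openn k u A) (form_openn k u B)
  | FAll tau A => FAll tau (form_openn k u A)
  | FEx tau A => FEx tau (form_openn k u A)
  | FNew nu A => FNew nu (form_openn (S k) u A)
  end.

(** Contexts  Sigma ::= . | Sigma, x:tau | Sigma # a:nu ,
    represented as lists with the most recent entry at the head. *)
Inductive entry : Type :=
| CV : nat -> type -> entry
| CN : nat -> sN Sg -> entry.

Definition ctx := list entry.

Definition entry_key (e : entry) : nat + nat :=
  match e with CV x _ => inl x | CN a _ => inr a end.

Definition ctx_ok (G : ctx) : Prop := NoDup (map entry_key G).

Definition var_in (G : ctx) (x : nat) : Prop := exists tau, In (CV x tau) G.
Definition name_in (G : ctx) (a : nat) : Prop := exists nu, In (CN a nu) G.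

Inductive typed (G : ctx) (bv : list type) (bn : list (sN Sg)) : tm -> type -> Prop :=
| ty_var x tau : In (CV x tau) G -> typed G bv bn (Var x) tau
| ty_bv i tau : nth_error bv i = Some tau -> typed G bv bn (BV i) tau
| ty_name a nu : In (CN a nu) G -> typed G bv bn (Name a) (TName nu)
| ty_bn i nu : nth_error bn i = Some nu -> typed G bv bn (BN i) (TName nu)
| ty_const c : typed G bv bn (Const c) (cty Sg c)
| ty_app f ts : Forall2 (typed G bv bn) ts (fst (fty Sg f)) ->
    typed G bv bn (App f ts) (snd (fty Sg f))
| ty_swap a b t nu tau : typed G bv bn a (TName nu) -> typed G bv bn b (TName nu) ->
    typed G bv bn t tau -> typed G bv bn (Swap a b t) tau
| ty_abs a t nu tau : typed G bv bn a (TName nu) -> typed G bv bn t tau ->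
    typed G bv bn (Abs a t) (TAbs nu tau).

Definition Tm (G : ctx) (t : tm) (tau : type) : Prop := typed G [] [] t tau.

Definition atom_wf (G : ctx) (bv : list type) (bn : list (sN Sg)) (A : atom) : Prop :=
  match A with
  | AEq t u => exists tau, typed G bv bn t tau /\ typed G bv bn u tau
  | AFresh a t => (exists nu, typed G bv bn a (TName nu)) /\ (exists tau, typed G bv bn t tau)
  | ARel p ts => Forall2 (typed G bv bn) ts (pty Sg p)
  end.

Fixpoint wff (G : ctx) (bv : list type) (bn : list (sN Sg)) (phi : form) : Prop :=
  match phi with
  | FTop | FBot => True
  | FAtom A => atom_wf G bv bn A
  | FAnd A B | FOr A B | FImp A B => wff G bv bn A /\ wff G bv bn B
  | FAll tau A | FEx tau A => wff G (tau :: bv) bn A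
  | FNew nu A => wff G bv (nu :: bn) A
  end.

Definition wf_form (G : ctx) (phi : form) : Prop := wff G [] [] phi.

Definition wf_seq (G : ctx) (Ga De : list form) : Prop :=
  ctx_ok G /\ Forall (wf_form G) Ga /\ Forall (wf_form G) De.

Fixpoint facts (G : ctx) (a : nat) (t : tm) : Prop :=
  match G with
  | [] => False
  | CV _ _ :: G' => facts G' a t
  | CN b _ :: G' => facts G' a t \/ (a = b /\ exists tau, Tm G' t tau)
  end.

Definition ctx_le (G G' : ctx) : Prop :=
  (forall t tau, Tm G t tau -> Tm G' t tau) /\
  (forall a t, facts G a t -> facts G' a t).

(** Instances  /\ Ps  ->  \/_i (/\ Qs_i)  of the nonlogical axioms
    (A2 is treated as the axiom E -> (a~b /\ t~u) \/ (a#u /\ t ~ (a b).u)).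
    Metavariables range over arbitrary terms; well-typedness in Sigma of the
    instance is ensured by the well-formedness of the sequents of the rule. *)
Inductive ax_inst (G : ctx) : list form -> list (list form) -> Prop :=
| ax_S1 a x : ax_inst G [] [[Eqf (Swap a a x) x]]
| ax_S2 a b x : ax_inst G [] [[Eqf (Swap a b (Swap a b x)) x]]
| ax_S3 a b : ax_inst G [] [[Eqf (Swap a b a) b]]
| ax_E1 a b c : ax_inst G [] [[Eqf (Swap a b (Const c)) (Const c)]]
(* E2 for every function symbol of the signature, including swapping and abstraction *)
| ax_E2_app a b f ts :
    ax_inst G [] [[Eqf (Swap a b (App f ts)) (App f (map (Swap a b) ts))]]
| ax_E2_swap a b c d t :
    ax_inst G [] [[Eqf (Swap a b (Swap c d t)) (Swap (Swap a b c) (Swap a b d) (Swap a b t))]]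
| ax_E2_abs a b c t :
    ax_inst G [] [[Eqf (Swap a b (Abs c t)) (Abs (Swap a b c) (Swap a b t))]]
(* E3 for every relation symbol, including equality and freshness *)
| ax_E3 a b A :
    ax_inst G [FAtom A] [[FAtom (atom_map (Swap a b) A)]]
| ax_F1 a b x : ax_inst G [Frf a x; Frf b x] [[Eqf (Swap a b x) x]]
| ax_F2 a b nu nu' : Tm G a (TName nu) -> Tm G b (TName nu') -> nu <> nu' ->
    ax_inst G [] [[Frf a b]]
| ax_F3 a : ax_inst G [Frf a a] []
| ax_F4 a b : ax_inst G [] [[Frf a b]; [Eqf a b]]
| ax_A1 a b x y : ax_inst G [Frf a y; Eqf x (Swap a b y)] [[Eqf (Abs a x) (Abs b y)]]
| ax_A2 a b t u : ax_inst G [Eqf (Abs a t) (Abs b u)]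
    [[Eqf a b; Eqf t u]; [Frf a u; Eqf t (Swap a b u)]].

(** Der n Sigma Gamma Delta  :  |-_n Sigma ; Gamma => Delta
    (a derivation of height at most n; zero-premise rules have height 0).
    Gamma, Delta are multisets, represented by lists up to permutation. *)
Inductive Der : nat -> ctx -> list form -> list form -> Prop :=
| d_init n G Ga De A : wf_seq G Ga De -> In (FAtom A) Ga -> In (FAtom A) De ->
    Der n G Ga De
| d_topR n G Ga De : wf_seq G Ga De -> In FTop De -> Der n G Ga De
| d_botL n G Ga De : wf_seq G Ga De -> In FBot Ga -> Der n G Ga De
| d_andL n G Ga De Ga0 A B : wf_seq G Ga De -> Permutation Ga (FAnd A B :: Ga0) ->
    Der n G (A :: B :: Ga0) De -> Der (S n) G Ga De
| d_andR n G Ga De De0 A B : wf_seq G Ga De -> Permutation De (FAnd A B :: De0) ->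
    Der n G Ga (A :: De0) -> Der n G Ga (B :: De0) -> Der (S n) G Ga De
| d_orL n G Ga De Ga0 A B : wf_seq G Ga De -> Permutation Ga (FOr A B :: Ga0) ->
    Der n G (A :: Ga0) De -> Der n G (B :: Ga0) De -> Der (S n) G Ga De
| d_orR n G Ga De De0 A B : wf_seq G Ga De -> Permutation De (FOr A B :: De0) ->
    Der n G Ga (A :: B :: De0) -> Der (S n) G Ga De
| d_impL n G Ga De Ga0 A B : wf_seq G Ga De -> Permutation Ga (FImp A B :: Ga0) ->
    Der n G Ga0 (A :: De) -> Der n G (B :: Ga0) De -> Der (S n) G Ga De
| d_impR n G Ga De De0 A B : wf_seq G Ga De -> Permutation De (FImp A B :: De0) ->
    Der n G (A :: Ga) (B :: De0) -> Der (S n) G Ga De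
| d_allL n G Ga De Ga0 tau A t : wf_seq G Ga De -> Permutation Ga (FAll tau A :: Ga0) ->
    Tm G t tau -> Der n G (form_openv 0 t A :: Ga) De -> Der (S n) G Ga De
| d_allR n G Ga De De0 tau A x : wf_seq G Ga De -> Permutation De (FAll tau A :: De0) ->
    ~ var_in G x -> Der n (CV x tau :: G) Ga (form_openv 0 (Var x) A :: De0) ->
    Der (S n) G Ga De
| d_exL n G Ga De Ga0 tau A x : wf_seq G Ga De -> Permutation Ga (FEx tau A :: Ga0) ->
    ~ var_in G x -> Der n (CV x tau :: G) (form_openv 0 (Var x) A :: Ga0) De ->
    Der (S n) G Ga De
| d_exR n G Ga De De0 tau A t : wf_seq G Ga De -> Permutation De (FEx tau A :: De0) ->
    Tm G t tau -> Der n G Ga (form_openv 0 t A :: De) -> Der (S n) G Ga De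
| d_newR n G Ga De De0 nu A a : wf_seq G Ga De -> Permutation De (FNew nu A :: De0) ->
    ~ name_in G a -> Der n (CN a nu :: G) Ga (form_openn 0 (Name a) A :: De0) ->
    Der (S n) G Ga De
| d_newL n G Ga De Ga0 nu A a : wf_seq G Ga De -> Permutation Ga (FNew nu A :: Ga0) ->
    ~ name_in G a -> Der n (CN a nu :: G) (form_openn 0 (Name a) A :: Ga0) De ->
    Der (S n) G Ga De
| d_eqR n G Ga De t tau : wf_seq G Ga De -> Tm G t tau ->
    Der n G (Eqf t t :: Ga) De -> Der (S n) G Ga De
(* (~S): P is an atom whose holes are the occurrences of BV 0 *)
| d_eqS n G Ga De Ga0 t u P : wf_seq G Ga De ->
    Permutation Ga (Eqf t u :: FAtom (atom_map (tm_openv 0 t) P) :: Ga0) ->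
    Der n G (FAtom (atom_map (tm_openv 0 u) P) :: Ga) De -> Der (S n) G Ga De
| d_ax n G Ga De Ga0 Ps Qss : wf_seq G Ga De -> ax_inst G Ps Qss -> Qss <> [] ->
    Permutation Ga (Ps ++ Ga0) ->
    (forall Qs, In Qs Qss -> Der n G (Qs ++ Ga) De) -> Der (S n) G Ga De
| d_ax0 n G Ga De Ga0 Ps : wf_seq G Ga De -> ax_inst G Ps [] ->
    Permutation Ga (Ps ++ Ga0) -> Der n G Ga De
(* (A3): a, x are (ordinary) variables *)
| d_A3 n G Ga De t nu sigma a x : wf_seq G Ga De -> Tm G t (TAbs nu sigma) ->
    ~ var_in G a -> ~ var_in G x -> a <> x ->
    Der n (CV x sigma :: CV a (TName nu) :: G) (Eqf t (Abs (Var a) (Var x)) :: Ga) De ->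
    Der (S n) G Ga De
| d_F n G Ga De a nu : wf_seq G Ga De -> ~ name_in G a ->
    Der n (CN a nu :: G) Ga De -> Der (S n) G Ga De
| d_fresh n G Ga De a t : wf_seq G Ga De -> facts G a t ->
    Der n G (Frf (Name a) t :: Ga) De -> Der (S n) G Ga De.

End NL.

(* Typing, well-formedness,
   axiom instances and the freshness facts |Sigma| are monotone in Sigma, so every
   rule transfers to Sigma' unchanged, except those whose premise extends the context
   by a new symbol (forall R, exists L, N R, N L, (A3), (F)): that symbol may already
   occur in Sigma'. Derivations are invariant, with the same height, under injective
   renamings of variables and name-symbols; the transposition of the new symbol with
   one fresh for Sigma' fixes Sigma and the side formulas, so it turns the premise
   into one over Sigma' extended by a fresh symbol, and the induction hypothesis
   applies to the extended contexts since Sigma, e <= Sigma', e. *)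
From Stdlib Require Import List Permutation FinFun PeanoNat Lia.
Import ListNotations.
Set Implicit Arguments.

Lemma Forall2_map_l_impl {A B} (P : A -> Prop) (R R' : A -> B -> Prop) (g : A -> A) ts Ls :
  Forall P ts -> Forall2 R ts Ls -> (forall t tau, P t -> R t tau -> R' (g t) tau) ->
  Forall2 R' (map g ts) Ls.
Proof. intros HP HR Hg. induction HR; simpl; constructor; inversion HP; subst; eauto. Qed.

Lemma map_Forall2_id {A B} (P : A -> Prop) (R : A -> B -> Prop) (g : A -> A) ts Ls :
  Forall P ts -> Forall2 R ts Ls -> (forall t tau, P t -> R t tau -> g t = t) ->
  map g ts = ts.
Proof. intros HP HR Hg. induction HR; simpl; auto. inversion HP; subst. f_equal; eauto. Qed.

Lemma Forall_perm_cons {A} {P : A -> Prop} {L x L0} :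
  Permutation L (x :: L0) -> Forall P L -> P x /\ Forall P L0.
Proof. intros HP HL. apply (Permutation_Forall HP), Forall_cons_iff in HL. exact HL. Qed.

Lemma exists_fresh_nat (L : list nat) : exists x, ~ In x L.
Proof.
  exists (1 + list_max L). intros Hin.
  assert (Hmax : list_max L <= list_max L) by lia.
  apply list_max_le, Forall_forall with (x := 1 + list_max L) in Hmax; auto. lia.
Qed.

Lemma injective_id : Injective (@id nat).
Proof. now intros ? ?. Qed.

Definition transp (x y z : nat) : nat :=
  if Nat.eqb z x then y else if Nat.eqb z y then x else z.

Lemma transp_inj x y : Injective (transp x y).
Proof.
  intros a b. unfold transp.
  destruct (Nat.eqb_spec a x), (Nat.eqb_spec b x), (Nat.eqb_spec a y), (Nat.eqb_spec b y); lia.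
Qed.

Lemma transp_l x y : transp x y x = y.
Proof. unfold transp. now rewrite Nat.eqb_refl. Qed.

Lemma transp_other x y z : z <> x -> z <> y -> transp x y z = z.
Proof. unfold transp. intros. destruct (Nat.eqb_spec z x), (Nat.eqb_spec z y); lia. Qed.

Section Renaming.
Variable Sg : Sig.

Lemma tm_nested_ind (P : tm Sg -> Prop) :
  (forall x, P (Var Sg x)) -> (forall i, P (BV Sg i)) -> (forall a, P (Name Sg a)) ->
  (forall i, P (BN Sg i)) -> (forall c, P (Const Sg c)) ->
  (forall f ts, Forall P ts -> P (App f ts)) ->
  (forall a b t, P a -> P b -> P t -> P (Swap a b t)) ->
  (forall a t, P a -> P t -> P (Abs a t)) -> forall t, P t.
Proof.
  intros Hvar Hbv Hname Hbn Hconst Happ Hswap Habs.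
  fix IH 1. intros [x|i|a|i|c|f ts|a b t|a t].
  - apply Hvar.
  - apply Hbv.
  - apply Hname.
  - apply Hbn.
  - apply Hconst.
  - apply Happ. induction ts as [|u ts IHts]; constructor; auto.
  - apply Hswap; auto.
  - apply Habs; auto.
Qed.

Variables (rv rn : nat -> nat).

Fixpoint tm_ren (t : tm Sg) : tm Sg :=
  match t with
  | Var _ x => Var Sg (rv x)
  | Name _ a => Name Sg (rn a)
  | App f ts => App f (map tm_ren ts)
  | Swap a b t => Swap (tm_ren a) (tm_ren b) (tm_ren t)
  | Abs a t => Abs (tm_ren a) (tm_ren t)
  | t => t
  end.

Fixpoint form_ren (phi : form Sg) : form Sg :=
  match phi with
  | FTop _ => FTop Sg
  | FBot _ => FBot Sg
  | FAtom A => FAtom (atom_map tm_ren A)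
  | FAnd A B => FAnd (form_ren A) (form_ren B)
  | FOr A B => FOr (form_ren A) (form_ren B)
  | FImp A B => FImp (form_ren A) (form_ren B)
  | FAll tau A => FAll tau (form_ren A)
  | FEx tau A => FEx tau (form_ren A)
  | FNew nu A => FNew nu (form_ren A)
  end.

Definition entry_ren (e : entry Sg) : entry Sg :=
  match e with CV x tau => CV (rv x) tau | CN _ a nu => CN Sg (rn a) nu end.

Definition ctx_ren (G : ctx Sg) : ctx Sg := map entry_ren G.

Lemma tm_ren_openv k u t : tm_ren (tm_openv k u t) = tm_openv k (tm_ren u) (tm_ren t).
Proof.
  induction t using tm_nested_ind; simpl; f_equal; auto.
  - destruct (Nat.eqb i k); auto.
  - rewrite !map_map. apply map_ext_Forall. eapply Forall_impl; [|eassumption]. auto.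
Qed.

Lemma tm_ren_openn k u t : tm_ren (tm_openn k u t) = tm_openn k (tm_ren u) (tm_ren t).
Proof.
  induction t using tm_nested_ind; simpl; f_equal; auto.
  - destruct (Nat.eqb i k); auto.
  - rewrite !map_map. apply map_ext_Forall. eapply Forall_impl; [|eassumption]. auto.
Qed.

Lemma atom_ren_openv k u P :
  atom_map tm_ren (atom_map (tm_openv k u) P) =
  atom_map (tm_openv k (tm_ren u)) (atom_map tm_ren P).
Proof.
  destruct P; simpl; rewrite ?tm_ren_openv; auto.
  rewrite !map_map. f_equal. apply map_ext, tm_ren_openv.
Qed.

Lemma atom_ren_openn k u P :
  atom_map tm_ren (atom_map (tm_openn k u) P) =
  atom_map (tm_openn k (tm_ren u)) (atom_map tm_ren P).
Proof.
  destruct P; simpl; rewrite ?tm_ren_openn; auto.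
  rewrite !map_map. f_equal. apply map_ext, tm_ren_openn.
Qed.

Lemma form_ren_openv phi :
  forall k u, form_ren (form_openv k u phi) = form_openv k (tm_ren u) (form_ren phi).
Proof. induction phi; intros; simpl; f_equal; auto using atom_ren_openv. Qed.

Lemma form_ren_openn phi :
  forall k u, form_ren (form_openn k u phi) = form_openn k (tm_ren u) (form_ren phi).
Proof. induction phi; intros; simpl; f_equal; auto using atom_ren_openn. Qed.

Section Transport.
Variables (G G' : ctx Sg).
Hypothesis ren_incl : forall e, In e G -> In (entry_ren e) G'.

Let ren_incl_var x tau : In (CV x tau) G -> In (CV (rv x) tau) G' := ren_incl (CV x tau).
Let ren_incl_name a nu : In (CN Sg a nu) G -> In (CN Sg (rn a) nu) G' := ren_incl (CN Sg a nu).

Lemma typed_ren bv bn t : forall tau, typed G bv bn t tau -> typed G' bv bn (tm_ren t) tau.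
Proof.
  induction t using tm_nested_ind; intros tau Ht; inversion Ht; subst; simpl.
  all: try (econstructor; eauto; fail).
  constructor. eapply Forall2_map_l_impl; eauto.
Qed.

Lemma wff_ren phi : forall bv bn, wff G bv bn phi -> wff G' bv bn (form_ren phi).
Proof.
  induction phi as [| |[t u|a t|p ts]| | | | | |]; intros bv bn H; simpl in *; try tauto; auto.
  all: try (destruct H; split; auto; fail).
  - destruct H as [tau [Ht Hu]]. exists tau; split; apply typed_ren; auto.
  - destruct H as [[nu Ha] [tau Ht]]. split; [exists nu|exists tau]; apply typed_ren; auto.
  - eapply Forall2_map_l_impl with (P := fun _ => True); eauto using typed_ren.
    apply Forall_forall; auto.
Qed.
End Transport.

Lemma typed_ctx_ren G bv bn t tau : typed G bv bn t tau -> typed (ctx_ren G) bv bn (tm_ren t) tau.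
Proof. apply typed_ren. intros e. apply in_map. Qed.

Lemma wff_ctx_ren G bv bn phi : wff G bv bn phi -> wff (ctx_ren G) bv bn (form_ren phi).
Proof. apply wff_ren. intros e. apply in_map. Qed.

Lemma facts_ctx_ren G a t : facts G a t -> facts (ctx_ren G) (rn a) (tm_ren t).
Proof.
  induction G as [|[x tau|b nu] G IH]; simpl; auto.
  intros [H|[-> [tau Ht]]]; auto. right. split; auto. exists tau. now apply typed_ctx_ren.
Qed.

Lemma ax_inst_ren G Ps Qss :
  ax_inst G Ps Qss -> ax_inst (ctx_ren G) (map form_ren Ps) (map (map form_ren) Qss).
Proof.
  destruct 1; simpl; try constructor.
  - pose proof (ax_E2_app (ctx_ren G) (tm_ren a) (tm_ren b) f (map tm_ren ts)) as H.
    rewrite !map_map in H. now rewrite map_map.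
  - replace (atom_map tm_ren (atom_map (Swap a b) A))
      with (atom_map (Swap (tm_ren a) (tm_ren b)) (atom_map tm_ren A)).
    + constructor.
    + destruct A; simpl; now rewrite ?map_map.
  - eapply ax_F2; try apply typed_ctx_ren; eassumption.
Qed.

Hypotheses (rv_inj : Injective rv) (rn_inj : Injective rn).

Lemma ctx_ok_ren G : ctx_ok G -> ctx_ok (ctx_ren G).
Proof.
  unfold ctx_ok, ctx_ren. intro H.
  replace (map (@entry_key Sg) (map entry_ren G))
    with (map (fun k => match k with inl x => inl (rv x) | inr a => inr (rn a) end)
              (map (@entry_key Sg) G)).
  - apply Injective_map_NoDup; auto.
    intros [x|x] [y|y] Hxy; inversion Hxy; f_equal; auto.
  - rewrite !map_map. apply map_ext. now intros [].
Qed.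

Lemma var_in_ren G x : ~ var_in G x -> ~ var_in (ctx_ren G) (rv x).
Proof.
  intros Hx [tau Hi]. apply in_map_iff in Hi as [[y tau'|b nu] [E Hi]]; [|discriminate].
  injection E as Ey <-. apply rv_inj in Ey as ->. apply Hx. now exists tau'.
Qed.

Lemma name_in_ren G a : ~ name_in G a -> ~ name_in (ctx_ren G) (rn a).
Proof.
  intros Ha [nu Hi]. apply in_map_iff in Hi as [[y tau|b nu'] [E Hi]]; [discriminate|].
  injection E as Eb <-. apply rn_inj in Eb as ->. apply Ha. now exists nu'.
Qed.

Lemma wf_seq_ren G Ga De : wf_seq G Ga De -> wf_seq (ctx_ren G) (map form_ren Ga) (map form_ren De).
Proof.
  intros [Hok [HGa HDe]]. split; [now apply ctx_ok_ren|].
  split; apply Forall_map; eapply Forall_impl; eauto; intros; now apply wff_ctx_ren.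
Qed.

Ltac not_ctx_ren G := lazymatch G with ctx_ren _ => fail | _ => idtac end.
Ltac not_map L := lazymatch L with map _ _ => fail | _ => idtac end.

(* Each side condition of the last rule is transported along the renaming; the
   guards keep already transported hypotheses from being rewritten again. *)
Lemma Der_ren n G Ga De : Der n G Ga De -> Der n (ctx_ren G) (map form_ren Ga) (map form_ren De).
Proof.
  induction 1;
  repeat match goal with
  | H : wf_seq ?G _ _ |- _ => not_ctx_ren G; apply wf_seq_ren in H
  | H : Permutation ?L _ |- _ =>
      not_map L; apply (Permutation_map form_ren) in H; simpl in H; rewrite ?map_app in H
  | H : In _ ?L |- _ => not_map L; apply (in_map form_ren) in H; simpl in H
  | H : ~ var_in ?G _ |- _ => not_ctx_ren G; apply var_in_ren in H
  | H : ~ name_in ?G _ |- _ => not_ctx_ren G; apply name_in_ren in H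
  | H : Tm ?G _ _ |- _ => not_ctx_ren G; apply typed_ctx_ren in H
  | H : facts ?G _ _ |- _ => not_ctx_ren G; apply facts_ctx_ren in H
  | H : ax_inst ?G _ _ |- _ => not_ctx_ren G; apply ax_inst_ren in H
  end; simpl in *; rewrite ?form_ren_openv, ?form_ren_openn in *.
  all: try (econstructor; eauto; fail).
  - rewrite !atom_ren_openv in *. eapply d_eqS; eauto.
  - eapply d_ax; eauto.
    + destruct Qss; simpl; congruence.
    + intros Qs HQ. apply in_map_iff in HQ as [Q0 [<- HQ]]. rewrite <- map_app. auto.
  - eapply d_A3 with (a := rv a) (x := rv x); eauto.
Qed.

Section Fixed.
Variable G : ctx Sg.
Hypothesis ren_fixes : forall e, In e G -> entry_ren e = e.

Lemma tm_ren_fix bv bn t : forall tau, typed G bv bn t tau -> tm_ren t = t.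
Proof.
  induction t using tm_nested_ind; intros tau Ht; inversion Ht; subst; simpl; f_equal; eauto.
  - now injection (ren_fixes (CV x tau)).
  - now injection (ren_fixes (CN Sg a nu)).
  - eapply map_Forall2_id; eauto.
Qed.

Lemma form_ren_fix phi : forall bv bn, wff G bv bn phi -> form_ren phi = phi.
Proof.
  induction phi as [| |[t u|a t|p ts]| | | | | |]; intros bv bn H; simpl in *; f_equal; eauto;
    try (destruct H; eauto; fail).
  - destruct H as [tau [Ht Hu]]. f_equal; eapply tm_ren_fix; eauto.
  - destruct H as [[nu Ha] [tau Ht]]. f_equal; eapply tm_ren_fix; eauto.
  - f_equal. eapply map_Forall2_id with (P := fun _ => True); eauto using tm_ren_fix.
    apply Forall_forall; auto.
Qed.

Lemma forms_ren_fix L : Forall (wf_form G) L -> map form_ren L = L.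
Proof. induction 1; simpl; f_equal; eauto using form_ren_fix. Qed.

Lemma form_ren_openv_fix bv bn k u A :
  wff G bv bn A -> form_ren (form_openv k u A) = form_openv k (tm_ren u) A.
Proof. intros HA. now rewrite form_ren_openv, (form_ren_fix _ _ _ HA). Qed.

Lemma form_ren_openn_fix bv bn k u A :
  wff G bv bn A -> form_ren (form_openn k u A) = form_openn k (tm_ren u) A.
Proof. intros HA. now rewrite form_ren_openn, (form_ren_fix _ _ _ HA). Qed.

Lemma Der_ren_extension n P Ga De :
  Der n (P ++ G) Ga De -> Der n (map entry_ren P ++ G) (map form_ren Ga) (map form_ren De).
Proof.
  intros D. apply Der_ren in D. unfold ctx_ren in D.
  rewrite map_app, (map_ext_in _ _ _ ren_fixes), map_id in D. exact D.
Qed.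
End Fixed.
End Renaming.

Section Weakening.
Variable Sg : Sig.

Lemma entry_ren_id (e : entry Sg) : entry_ren id id e = e.
Proof. now destruct e. Qed.

Lemma typed_mono (G G' : ctx Sg) bv bn t tau :
  incl G G' -> typed G bv bn t tau -> typed G' bv bn t tau.
Proof.
  intros Hincl Ht. rewrite <- (tm_ren_fix id id (fun e _ => entry_ren_id e) Ht).
  apply (typed_ren id id (G := G) G'); auto. intros e He. rewrite entry_ren_id. auto.
Qed.

Lemma wff_mono (G G' : ctx Sg) bv bn phi : incl G G' -> wff G bv bn phi -> wff G' bv bn phi.
Proof.
  intros Hincl Hphi. rewrite <- (form_ren_fix id id G (fun e _ => entry_ren_id e) _ _ _ Hphi).
  apply (wff_ren id id G G'); auto. intros e He. rewrite entry_ren_id. auto.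
Qed.

Lemma wf_seq_mono (G G' : ctx Sg) Ga De :
  incl G G' -> ctx_ok G' -> wf_seq G Ga De -> wf_seq G' Ga De.
Proof.
  intros Hincl Hok [_ [HGa HDe]].
  repeat split; auto; eapply Forall_impl; try eassumption; intros; eapply wff_mono; eauto.
Qed.

Lemma ctx_le_incl (G G' : ctx Sg) : ctx_le G G' -> incl G G'.
Proof.
  intros [Htm _] [x tau|a nu] He.
  - assert (Ht : Tm G (Var Sg x) tau) by now constructor.
    apply Htm in Ht. now inversion Ht.
  - assert (Ht : Tm G (Name Sg a) (TName nu)) by now constructor.
    apply Htm in Ht. now inversion Ht.
Qed.

Lemma ax_inst_mono (G G' : ctx Sg) Ps Qss :
  ctx_le G G' -> ax_inst G Ps Qss -> ax_inst G' Ps Qss.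
Proof. intros [Htm _]. destruct 1; try constructor. eapply ax_F2; eauto. Qed.

Lemma ctx_le_cons (G G' : ctx Sg) e : ctx_le G G' -> ctx_le (e :: G) (e :: G').
Proof.
  intros Hle. split.
  - intros t tau. apply typed_mono. apply incl_cons; [now left|].
    apply incl_tl, ctx_le_incl, Hle.
  - destruct e as [x tau|b nu]; simpl; intros a u Hf; [now apply Hle|].
    destruct Hf as [Hf|[-> [tau Ht]]]; [left; now apply Hle|right].
    split; auto. exists tau. now apply Hle.
Qed.

Lemma ctx_ok_cons_var (G : ctx Sg) x tau : ctx_ok G -> ~ var_in G x -> ctx_ok (CV x tau :: G).
Proof.
  intros Hok Hx. constructor; auto.
  intros Hi. apply in_map_iff in Hi as [[y tau'|b nu] [E Hi]]; [|discriminate].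
  injection E as ->. apply Hx. now exists tau'.
Qed.

Lemma ctx_ok_cons_name (G : ctx Sg) a nu : ctx_ok G -> ~ name_in G a -> ctx_ok (CN Sg a nu :: G).
Proof.
  intros Hok Ha. constructor; auto.
  intros Hi. apply in_map_iff in Hi as [[y tau|b nu'] [E Hi]]; [discriminate|].
  injection E as ->. apply Ha. now exists nu'.
Qed.

Lemma not_var_in_incl (G G' : ctx Sg) x : incl G G' -> ~ var_in G' x -> ~ var_in G x.
Proof. intros Hincl Hx [tau Hi]. apply Hx. exists tau. now apply Hincl. Qed.

Lemma not_var_in_cons (G : ctx Sg) x y tau : ~ var_in G x -> x <> y -> ~ var_in (CV y tau :: G) x.
Proof. intros Hx Hxy [tau' [E|Hi]]; [injection E; auto|apply Hx; now exists tau']. Qed.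

Lemma not_name_in_incl (G G' : ctx Sg) a : incl G G' -> ~ name_in G' a -> ~ name_in G a.
Proof. intros Hincl Ha [nu Hi]. apply Ha. exists nu. now apply Hincl. Qed.

Definition entry_sym (e : entry Sg) : nat := match e with CV x _ => x | CN _ a _ => a end.

Lemma exists_fresh_var (G : ctx Sg) (L : list nat) : exists x, ~ var_in G x /\ ~ In x L.
Proof.
  destruct (exists_fresh_nat (L ++ map entry_sym G)) as [x Hx]. exists x. split.
  - intros [tau Hi]. apply Hx, in_or_app. right. apply (in_map entry_sym) in Hi. exact Hi.
  - intros Hi. apply Hx, in_or_app. now left.
Qed.

Lemma exists_fresh_name (G : ctx Sg) : exists a, ~ name_in G a.
Proof.
  destruct (exists_fresh_nat (map entry_sym G)) as [a Ha]. exists a.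
  intros [nu Hi]. apply Ha. apply (in_map entry_sym) in Hi. exact Hi.
Qed.

Lemma transp_fixes_vars (G : ctx Sg) x x' :
  ~ var_in G x -> ~ var_in G x' -> forall e, In e G -> entry_ren (transp x x') id e = e.
Proof.
  intros Hx Hx' [y tau|a nu] He; simpl; f_equal.
  apply transp_other; intros ->; [apply Hx|apply Hx']; now exists tau.
Qed.

Lemma transp_fixes_names (G : ctx Sg) a a' :
  ~ name_in G a -> ~ name_in G a' -> forall e, In e G -> entry_ren id (transp a a') e = e.
Proof.
  intros Ha Ha' [y tau|b nu] He; simpl; f_equal.
  apply transp_other; intros ->; [apply Ha|apply Ha']; now exists nu.
Qed.

Definition weakening_at (n : nat) : Prop :=
  forall (G G' : ctx Sg) Ga De, Der n G Ga De -> ctx_ok G' -> ctx_le G G' -> Der n G' Ga De.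

Section EigenvariableRules.
Variables (n : nat) (G G' : ctx Sg) (Ga De : list (form Sg)).
Hypotheses (IH : weakening_at n) (Hwf : wf_seq G Ga De) (Hok : ctx_ok G') (Hle : ctx_le G G').

Lemma weaken_var_premise x tau Ga1 De1 :
  ~ var_in G x -> Der n (CV x tau :: G) Ga1 De1 ->
  exists x', ~ var_in G' x' /\ (forall e, In e G -> entry_ren (transp x x') id e = e) /\
    Der n (CV x' tau :: G')
      (map (form_ren (transp x x') id) Ga1) (map (form_ren (transp x x') id) De1).
Proof.
  intros Hx D.
  destruct (exists_fresh_var G' []) as [x' [Hx' _]].
  pose proof (transp_fixes_vars Hx (not_var_in_incl (ctx_le_incl Hle) Hx')) as Hfix.
  apply (Der_ren_extension (transp_inj x x') injective_id G Hfix [CV x tau]) in D.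
  simpl in D. rewrite transp_l in D.
  exists x'. repeat split; auto.
  apply (IH D); auto using ctx_ok_cons_var, ctx_le_cons.
Qed.

Lemma weaken_name_premise a nu Ga1 De1 :
  ~ name_in G a -> Der n (CN Sg a nu :: G) Ga1 De1 ->
  exists a', ~ name_in G' a' /\ (forall e, In e G -> entry_ren id (transp a a') e = e) /\
    Der n (CN Sg a' nu :: G')
      (map (form_ren id (transp a a')) Ga1) (map (form_ren id (transp a a')) De1).
Proof.
  intros Ha D.
  destruct (exists_fresh_name G') as [a' Ha'].
  pose proof (transp_fixes_names Ha (not_name_in_incl (ctx_le_incl Hle) Ha')) as Hfix.
  apply (Der_ren_extension injective_id (transp_inj a a') G Hfix [CN Sg a nu]) in D.
  simpl in D. rewrite transp_l in D.
  exists a'. repeat split; auto.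
  apply (IH D); auto using ctx_ok_cons_name, ctx_le_cons.
Qed.

Lemma weaken_allR De0 tau A x :
  Permutation De (FAll tau A :: De0) -> ~ var_in G x ->
  Der n (CV x tau :: G) Ga (form_openv 0 (Var Sg x) A :: De0) -> Der (S n) G' Ga De.
Proof.
  intros HP Hx D. destruct Hwf as [_ [HGa HDe]].
  destruct (Forall_perm_cons HP HDe) as [HA HDe0]. cbn in HA.
  destruct (weaken_var_premise Hx D) as (x' & Hx' & Hfix & D'). simpl in D'.
  rewrite (form_ren_openv_fix _ _ G Hfix _ _ _ _ _ HA), !(forms_ren_fix _ _ Hfix) in D'
    by assumption.
  simpl in D'. rewrite transp_l in D'.
  eapply d_allR with (x := x'); eauto using wf_seq_mono, ctx_le_incl.
Qed.

Lemma weaken_exL Ga0 tau A x :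
  Permutation Ga (FEx tau A :: Ga0) -> ~ var_in G x ->
  Der n (CV x tau :: G) (form_openv 0 (Var Sg x) A :: Ga0) De -> Der (S n) G' Ga De.
Proof.
  intros HP Hx D. destruct Hwf as [_ [HGa HDe]].
  destruct (Forall_perm_cons HP HGa) as [HA HGa0]. cbn in HA.
  destruct (weaken_var_premise Hx D) as (x' & Hx' & Hfix & D'). simpl in D'.
  rewrite (form_ren_openv_fix _ _ G Hfix _ _ _ _ _ HA), !(forms_ren_fix _ _ Hfix) in D'
    by assumption.
  simpl in D'. rewrite transp_l in D'.
  eapply d_exL with (x := x'); eauto using wf_seq_mono, ctx_le_incl.
Qed.

Lemma weaken_newR De0 nu A a :
  Permutation De (FNew nu A :: De0) -> ~ name_in G a ->
  Der n (CN Sg a nu :: G) Ga (form_openn 0 (Name Sg a) A :: De0) -> Der (S n) G' Ga De.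
Proof.
  intros HP Ha D. destruct Hwf as [_ [HGa HDe]].
  destruct (Forall_perm_cons HP HDe) as [HA HDe0]. cbn in HA.
  destruct (weaken_name_premise Ha D) as (a' & Ha' & Hfix & D'). simpl in D'.
  rewrite (form_ren_openn_fix _ _ G Hfix _ _ _ _ _ HA), !(forms_ren_fix _ _ Hfix) in D'
    by assumption.
  simpl in D'. rewrite transp_l in D'.
  eapply d_newR with (a := a'); eauto using wf_seq_mono, ctx_le_incl.
Qed.

Lemma weaken_newL Ga0 nu A a :
  Permutation Ga (FNew nu A :: Ga0) -> ~ name_in G a ->
  Der n (CN Sg a nu :: G) (form_openn 0 (Name Sg a) A :: Ga0) De -> Der (S n) G' Ga De.
Proof.
  intros HP Ha D. destruct Hwf as [_ [HGa HDe]].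
  destruct (Forall_perm_cons HP HGa) as [HA HGa0]. cbn in HA.
  destruct (weaken_name_premise Ha D) as (a' & Ha' & Hfix & D'). simpl in D'.
  rewrite (form_ren_openn_fix _ _ G Hfix _ _ _ _ _ HA), !(forms_ren_fix _ _ Hfix) in D'
    by assumption.
  simpl in D'. rewrite transp_l in D'.
  eapply d_newL with (a := a'); eauto using wf_seq_mono, ctx_le_incl.
Qed.

Lemma weaken_F a nu :
  ~ name_in G a -> Der n (CN Sg a nu :: G) Ga De -> Der (S n) G' Ga De.
Proof.
  intros Ha D. destruct Hwf as [_ [HGa HDe]].
  destruct (weaken_name_premise Ha D) as (a' & Ha' & Hfix & D').
  rewrite !(forms_ren_fix _ _ Hfix) in D' by assumption.
  eapply d_F with (a := a'); eauto using wf_seq_mono, ctx_le_incl.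
Qed.

Lemma weaken_A3 t nu sigma a x :
  Tm G t (TAbs nu sigma) -> ~ var_in G a -> ~ var_in G x -> a <> x ->
  Der n (CV x sigma :: CV a (TName nu) :: G) (Eqf t (Abs (Var Sg a) (Var Sg x)) :: Ga) De ->
  Der (S n) G' Ga De.
Proof.
  intros Ht Ha Hx Hax D. destruct Hwf as [_ [HGa HDe]].
  destruct (exists_fresh_var G' [x]) as [a' [Ha' Ha'x]].
  destruct (exists_fresh_var G' [a; a']) as [x' [Hx' Hx'a]].
  simpl in Ha'x, Hx'a.
  pose proof (transp_fixes_vars Ha (not_var_in_incl (ctx_le_incl Hle) Ha')) as Hfa.
  pose proof (transp_fixes_vars Hx (not_var_in_incl (ctx_le_incl Hle) Hx')) as Hfx.
  apply (Der_ren_extension (transp_inj a a') injective_id G Hfa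
           [CV x sigma; CV a (TName nu)]) in D.
  simpl in D. rewrite transp_l, transp_other in D by lia.
  rewrite (tm_ren_fix _ _ Hfa Ht), !(forms_ren_fix _ _ Hfa) in D by assumption.
  apply (Der_ren_extension (transp_inj x x') injective_id G Hfx
           [CV x sigma; CV a' (TName nu)]) in D.
  simpl in D. rewrite transp_l, transp_other in D by lia.
  rewrite (tm_ren_fix _ _ Hfx Ht), !(forms_ren_fix _ _ Hfx) in D by assumption.
  apply d_A3 with (t := t) (nu := nu) (sigma := sigma) (a := a') (x := x').
  - now apply (wf_seq_mono (ctx_le_incl Hle)).
  - now apply Hle.
  - exact Ha'.
  - exact Hx'.
  - lia.
  - apply (IH D); [|now apply ctx_le_cons, ctx_le_cons].
    apply ctx_ok_cons_var; [now apply ctx_ok_cons_var|apply not_var_in_cons; auto; lia].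
Qed.
End EigenvariableRules.

Theorem weakening_height n : weakening_at n.
Proof.
  induction n as [|n IH]; intros G G' Ga De D Hok Hle; inversion D; subst.
  all: pose proof Hle as [Htm Hfacts]; pose proof (ctx_le_incl Hle) as Hincl.
  all: try (econstructor; eauto using wf_seq_mono, ax_inst_mono; intros; eapply IH; eauto; fail).
  all: solve [ eapply weaken_allR; [..|eassumption]; eauto
             | eapply weaken_exL; [..|eassumption]; eauto
             | eapply weaken_newR; [..|eassumption]; eauto
             | eapply weaken_newL; [..|eassumption]; eauto
             | eapply weaken_A3; [..|eassumption]; eauto
             | eapply weaken_F; [..|eassumption]; eauto ].
Qed.
End Weakening.

Theorem mainTheorem19 (S : Sig) (n : nat) (Sg Sg' : ctx S) (Ga De : list (form S)) :
  Der n Sg Ga De -> ctx_ok Sg' -> ctx_le Sg Sg' -> Der n Sg' Ga De.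
Proof. apply weakening_height. Qed.
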